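(* For every detector $\hat\theta$, every $p>1$, and every measurable $\zeta_1:\mathcal{X}\to[0,\infty)$ with $0<{\rm E}[\zeta_1(\mathbf{x})]<\infty$ and $0<{\rm E}\big[\zeta_1(\mathbf{x})^{\frac{p}{p-1}}\sum_{i=1}^M P(\theta_i|\mathbf{x})^{\frac{1}{1-p}}\big]<\infty$, $$P_e\geq (M-1)^p\,{\rm E}^p\big[\zeta_1(\mathbf{x})\big]\;{\rm E}^{1-p}\Big[\zeta_1(\mathbf{x})^{\frac{p}{p-1}}\sum_{i=1}^M P(\theta_i|\mathbf{x})^{\frac{1}{1-p}}\Big].$$
   Context: $M$-ary hypothesis testing: the true hypothesis $\theta$ is a random variable with values in $\{\theta_1,\ldots,\theta_M\}$, $\mathbf{x}$ is a random observation in a measurable space $\mathcal{X}$, and $P(\theta_i|\mathbf{x})$ is the posterior probability of $\theta_i$ given $\mathbf{x}$, assumed to satisfy $P(\theta_i|\mathbf{x})>0$ for all $\mathbf{x}$, $i$. A detector is a measurable map $\hat\theta:\mathcal{X}\to\{\theta_1,\ldots,\theta_M\}$, and its probability of error is $P_e=\Pr(\hat\theta(\mathbf{x})\neq\theta)$. ${\rm E}^a[Y]$ denotes $({\rm E}[Y])^a$. *)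

From HB Require Import structures.
From mathcomp Require Import all_boot all_order all_algebra.
From mathcomp Require Import all_classical all_reals all_analysis.
Set Implicit Arguments. Unset Strict Implicit. Unset Printing Implicit Defensive.
Import Order.TTheory GRing.Theory Num.Theory.
Local Open Scope classical_set_scope.
Local Open Scope ring_scope.
Local Open Scope ereal_scope.

(* The observation x has law P on X, and
   post i x = P(theta_i | x) is the posterior.  The joint law of (theta, x)
   is then  Pr(theta = theta_i, x \in A) = \int_A post i x dP(x), so the
   probability of error of a detector thetahat is
     Pe = Pr(thetahat(x) <> theta)
        = \sum_i \int [thetahat x <> theta_i] P(theta_i|x) dP(x). *)
Definition error_prob d (X : measurableType d) (R : realType)
  (P : probability X R) (M : nat) (post : 'I_M -> X -> R)
  (thetahat : X -> 'I_M) : \bar R :=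
  \sum_(i < M) \int[P]_x (((thetahat x != i)%:R * post i x)%R)%:E.

Definition is_posterior d (X : measurableType d) (R : realType) (M : nat)
  (post : 'I_M -> X -> R) : Prop :=
  (forall i, measurable_fun setT (post i)) /\
  (forall i x, (0 < post i x)%R) /\
  (forall x, (\sum_(i < M) post i x)%R = 1%R).

Definition is_detector d (X : measurableType d) (M : nat)
  (thetahat : X -> 'I_M) : Prop :=
  forall i : 'I_M, measurable (thetahat @^-1` [set i]).

From HB Require Import structures.
From mathcomp Require Import all_boot all_order all_algebra.
From mathcomp Require Import all_classical all_reals all_analysis.
From mathcomp Require Import ring lra.
From mathcomp Require Import measurable_realfun measurable_fun_approximation.
Set Implicit Arguments. Unset Strict Implicit. Unset Printing Implicit Defensive.
Import Order.TTheory GRing.Theory Num.Theory.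
Local Open Scope ring_scope.

(* Write q := p / (p - 1) for the conjugate exponent.  Young's inequality in
   the form  p s c <= u + (p - 1) (s c)^q u^(1/(1-p))  (valid for all s >= 0),
   applied to u := P(theta_i | x) for each of the M - 1 hypotheses i other than
   the decision, and then integrated, gives for every scale s >= 0
     (M - 1) p s E[zeta1] <= P_e + (p - 1) s^q E[zeta1^q sum_i P(theta_i|x)^(1/(1-p))].
   Optimising over s (the equality case of Young's inequality) yields the
   bound. *)

Section young.
Variables (R : realType) (p : R).
Hypothesis p_gt1 : 1 < p.

Let p_gt0 : 0 < p. Proof. exact: lt_trans ltr01 p_gt1. Qed.
Let p_neq0 : p != 0. Proof. by rewrite gt_eqF. Qed.
Let pB1_neq0 : p - 1 != 0. Proof. by rewrite subr_eq0 gt_eqF. Qed.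
Let oneBp_neq0 : 1 - p != 0. Proof. by rewrite subr_eq0 lt_eqF. Qed.

Lemma young_dual (a u : R) : 0 <= a -> 0 < u ->
  p * a <= u + (p - 1) * a `^ (p / (p - 1)) * u `^ (1 / (1 - p)).
Proof.
move=> a0 u0.
have q0 : 0 < p / (p - 1) by rewrite divr_gt0 // subr_gt0.
have pq : p^-1 + (p / (p - 1))^-1 = 1 by rewrite invf_div; field.
(* split a as u^(1/p) * (a u^(-1/p)) *)
have := conjugate_powR (powR_ge0 u p^-1)
  (mulr_ge0 a0 (powR_ge0 u (- p^-1))) p_gt0 q0 pq.
rewrite mulrCA -powRD ?subrr ?powRr0 ?mulr1; last first.
  by rewrite implybE (gt_eqF u0) orbT.
rewrite -powRrM mulVf // (powRr1 (ltW u0)) powRM ?powR_ge0 // -powRrM.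
have -> : - p^-1 * (p / (p - 1)) = 1 / (1 - p).
  by field; rewrite oneBp_neq0 pB1_neq0 p_neq0.
suff <- : p * (u / p + a `^ (p / (p - 1)) * u `^ (1 / (1 - p)) / (p / (p - 1)))
    = u + (p - 1) * a `^ (p / (p - 1)) * u `^ (1 / (1 - p)).
  by rewrite ler_pM2l.
by field; rewrite pB1_neq0 p_neq0.
Qed.

(* [s] maximises  s |-> p s a - (p - 1) s^q S. *)
Lemma young_dual_optimum (a S : R) : 0 <= a -> 0 < S ->
  let s := a `^ (p - 1) * S `^ (1 - p) in
  p * s * a - (p - 1) * s `^ (p / (p - 1)) * S = a `^ p * S `^ (1 - p).
Proof.
move=> a0 S0 s.
have s_q : s `^ (p / (p - 1)) = a `^ p * S `^ (- p).
  rewrite /s powRM ?powR_ge0 // -!powRrM.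
  have -> : (p - 1) * (p / (p - 1)) = p by field; rewrite pB1_neq0.
  by have -> : (1 - p) * (p / (p - 1)) = - p by field; rewrite pB1_neq0.
have a_p : a `^ (p - 1) * a = a `^ p.
  rewrite -{2}(powRr1 a0) -powRD; first by congr (_ `^ _); ring.
  by rewrite implybE (_ : p - 1 + 1 = p) ?p_neq0 //; ring.
have S_1p : S `^ (- p) * S = S `^ (1 - p).
  rewrite -{2}(powRr1 (ltW S0)) -powRD; first by congr (_ `^ _); ring.
  by rewrite implybE (gt_eqF S0) orbT.
by rewrite s_q /s -S_1p -a_p; ring.
Qed.

Lemma sum_neq_ord (M : nat) (th : 'I_M) :
  \sum_(i < M) ((th != i)%:R : R) = M%:R - 1.
Proof.
rewrite (bigD1 th) //= eqxx add0r (eq_bigr (fun _ => 1)); last first.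
  by move=> i; rewrite eq_sym => ->.
rewrite sumr_const cardC1 card_ord.
by case: M th => [[]//|n _]; rewrite -natr1 addrK.
Qed.

Lemma error_density_ge (M : nat) (th : 'I_M) (u : 'I_M -> R) (s c : R) :
  0 <= s -> 0 <= c -> (forall i, 0 < u i) ->
  (M%:R - 1) * p * s * c <=
  \sum_(i < M) ((th != i)%:R * u i) +
  (p - 1) * s `^ (p / (p - 1)) * (c `^ (p / (p - 1)) * \sum_(i < M) u i `^ (1 / (1 - p))).
Proof.
move=> s0 c0 u0.
have -> : (p - 1) * s `^ (p / (p - 1)) *
    (c `^ (p / (p - 1)) * \sum_(i < M) u i `^ (1 / (1 - p))) =
    \sum_(i < M) (p - 1) * (s * c) `^ (p / (p - 1)) * u i `^ (1 / (1 - p)).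
  by rewrite powRM // !mulr_sumr; apply: eq_bigr => i _; ring.
rewrite -(sum_neq_ord th) !mulr_suml -big_split /=.
apply: ler_sum => i _; case: (th != i); rewrite /= ?mul0r ?add0r.
  by have := young_dual (mulr_ge0 s0 c0) (u0 i); rewrite !mul1r; lra.
by rewrite !mulr_ge0 ?powR_ge0 // subr_ge0 ltW.
Qed.

End young.

Local Open Scope classical_set_scope.
Local Open Scope ereal_scope.

Lemma probability_inhabited d (X : measurableType d) (R : realType)
  (P : probability X R) : inhabited X.
Proof.
apply: contrapT => noX.
have setT0 : [set: X] = set0 by apply/seteqP; split => x // _; apply: noX.
by have := probability_setT P; rewrite setT0 measure0 => /eqP; rewrite eqe eq_sym oner_eq0.
Qed.

Section error_probability.
Variables (d : measure_display) (X : measurableType d) (R : realType).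
Variables (P : probability X R) (M : nat).
Variables (post : 'I_M -> X -> R) (thetahat : X -> 'I_M).
Hypothesis post_measurable : forall i, measurable_fun setT (post i).
Hypothesis post_gt0 : forall i x, (0 < post i x)%R.
Hypothesis thetahat_detector : is_detector thetahat.

Lemma measurable_fun_neq_detector (i : 'I_M) :
  measurable_fun setT (fun x => ((thetahat x != i)%:R : R)).
Proof.
rewrite (_ : (fun x => _) = (fun x => 1 - \1_(thetahat @^-1` [set i]) x)%R).
  exact/measurable_funB/measurable_indic.
apply/funext => x; rewrite indicE.
have [eq|neq] := eqVneq (thetahat x) i; first by rewrite mem_set //= subrr.
by rewrite memNset ?subr0 //= => /eqP; rewrite (negbTE neq).
Qed.

Definition error_density x := (\sum_(i < M) (thetahat x != i)%:R * post i x)%R.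

Let measurable_error_density : measurable_fun setT error_density.
Proof.
by apply: measurable_sum => i; apply/measurable_funM/post_measurable;
  exact: measurable_fun_neq_detector.
Qed.

Lemma error_probE :
  error_prob P post thetahat = \int[P]_x (error_density x)%:E.
Proof.
rewrite /error_prob -ge0_integral_sum //.
- by apply: eq_integral => x _; rewrite sumEFin.
- move=> i; apply/measurable_EFinP/measurable_funM/post_measurable.
  exact: measurable_fun_neq_detector.
- by move=> i x _; rewrite lee_fin mulr_ge0 // ltW.
Qed.

Lemma hypotheses_gt0 : (0 < M)%N.
Proof. by case: (probability_inhabited P) => x; apply: leq_ltn_trans (ltn_ord (thetahat x)). Qed.

Lemma young_bound_error_prob (p s : R) (zeta : X -> R) :
  (1 < p)%R -> (0 <= s)%R ->
  measurable_fun setT zeta -> (forall x, 0 <= zeta x)%R ->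
  ((M%:R - 1) * p * s)%:E * \int[P]_x (zeta x)%:E <=
  error_prob P post thetahat + ((p - 1) * s `^ (p / (p - 1)))%:E *
    \int[P]_x (zeta x `^ (p / (p - 1)) *
               \sum_(i < M) post i x `^ (1 / (1 - p)))%:E.
Proof.
move=> p_gt1 s_ge0 zeta_measurable zeta_ge0.
have p_gt0 : (0 < p)%R by exact: lt_trans ltr01 p_gt1.
have powR_measurable r (f : X -> R) : measurable_fun setT f ->
    measurable_fun setT (fun x => f x `^ r)%R.
  by move=> f_measurable; exact: measurableT_comp (measurable_powR _) f_measurable.
have weight_measurable : measurable_fun setT (fun x => zeta x `^ (p / (p - 1)) *
    \sum_(i < M) post i x `^ (1 / (1 - p)))%R.
  apply: measurable_funM; first exact: powR_measurable.
  by apply: measurable_sum => i; exact: powR_measurable.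
have weight_ge0 x : (0 <= zeta x `^ (p / (p - 1)) * \sum_(i < M) post i x `^ (1 / (1 - p)))%R.
  by rewrite mulr_ge0 ?powR_ge0 ?sumr_ge0 // => i _; rewrite powR_ge0.
have density_ge0 x : (0 <= error_density x)%R.
  by rewrite sumr_ge0 // => i _; rewrite mulr_ge0 // ltW.
set k1 := ((M%:R - 1) * p * s)%R.
set k2 := ((p - 1) * s `^ (p / (p - 1)))%R.
have k1_ge0 : (0 <= k1)%R by rewrite !mulr_ge0 ?subr_ge0 ?ler1n ?hypotheses_gt0 // ltW.
have k2_ge0 : (0 <= k2)%R by rewrite mulr_ge0 ?powR_ge0 // subr_ge0 ltW.
have k2weight_measurable : measurable_fun setT (fun x => k2%:E *
    (zeta x `^ (p / (p - 1)) * \sum_(i < M) post i x `^ (1 / (1 - p)))%:E).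
  by apply/measurable_EFinP/measurable_funM => //; exact: measurable_cst.
rewrite error_probE -!ge0_integralZl_EFin //;
  try exact/measurable_EFinP; try by move=> x _; rewrite lee_fin.
rewrite -ge0_integralD //; last 3 first.
- by move=> x _; rewrite lee_fin.
- exact/measurable_EFinP.
- by move=> x _; rewrite -EFinM lee_fin mulr_ge0.
apply: ge0_le_integral => //.
- by move=> x _; rewrite -EFinM lee_fin mulr_ge0.
- by apply/measurable_EFinP/measurable_funM => //; exact: measurable_cst.
- by apply: emeasurable_funD => //; exact/measurable_EFinP.
move=> x _; rewrite -!EFinM -EFinD lee_fin /k1 /k2.
have := error_density_ge p_gt1 (thetahat x) s_ge0 (zeta_ge0 x) (post_gt0 ^~ x).
by rewrite !mulrA; apply.
Qed.

End error_probability.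

Theorem mainTheorem3 (d : measure_display) (X : measurableType d)
  (R : realType) (P : probability X R) (M : nat)
  (post : 'I_M -> X -> R) (thetahat : X -> 'I_M) (p : R)
  (zeta1 : X -> R) :
  is_posterior post ->
  is_detector thetahat ->
  (1 < p)%R ->
  measurable_fun setT zeta1 ->
  (forall x, (0 <= zeta1 x)%R) ->
  0 < \int[P]_x (zeta1 x)%:E < +oo ->
  0 < \int[P]_x ((zeta1 x `^ (p / (p - 1))) *
                   \sum_(i < M) (post i x `^ (1 / (1 - p))))%:E < +oo ->
  error_prob P post thetahat >=
    ((M%:R - 1) `^ p
     * (fine (\int[P]_x (zeta1 x)%:E)) `^ p
     * (fine (\int[P]_x ((zeta1 x `^ (p / (p - 1))) *
                   \sum_(i < M) (post i x `^ (1 / (1 - p))))%:E)) `^ (1 - p))%:E.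
Proof.
move=> [post_measurable [post_gt0 _]] detector p_gt1 zeta1_measurable zeta1_ge0.
move=> /andP[E_gt0 E_fin] /andP[S_gt0 S_fin].
set E := fine _; set S := fine _.
have intE : \int[P]_x (zeta1 x)%:E = E%:E by rewrite fineK // ge0_fin_numE // ltW.
have intS : \int[P]_x ((zeta1 x `^ (p / (p - 1))) *
    \sum_(i < M) (post i x `^ (1 / (1 - p))))%:E = S%:E.
  by rewrite fineK // ge0_fin_numE // ltW.
clearbody E S.
have E_ge0 : (0 <= E)%R by rewrite -lee_fin -intE ltW.
have {}S_gt0 : (0 < S)%R by rewrite -lte_fin -intS.
have m_ge0 : (0 <= M%:R - 1 :> R)%R.
  by rewrite subr_ge0 ler1n (hypotheses_gt0 P thetahat).
have mE_ge0 := mulr_ge0 m_ge0 E_ge0.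
pose s := (((M%:R - 1) * E) `^ (p - 1) * S `^ (1 - p))%R.
have s_ge0 : (0 <= s)%R by rewrite mulr_ge0 ?powR_ge0.
have := young_bound_error_prob P post_measurable post_gt0 detector
  p_gt1 s_ge0 zeta1_measurable zeta1_ge0.
rewrite intE intS -!EFinM -leeBlDr // -EFinB; apply: le_trans.
rewrite -powRM // lee_fin -(young_dual_optimum p_gt1 mE_ge0 S_gt0).
by rewrite -/s mulrA (mulrC (p * s)%R) !mulrA.
Qed.
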